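(* Let $\Delta t>0$, $L>0$, $M\ge0$, $\alpha=\Delta t\big[1+\frac{L\Delta t}{2}+\frac{(L\Delta t)^2}{6}+\frac{(L\Delta t)^3}{24}\big]$, and let $\Phi:\mathbb{R}^n\to\mathbb{R}^n$ be the one-step Runge–Kutta state-transition map, assumed to satisfy $\|\Phi(x)-\Phi(y)\|\le(1+L\alpha)\|x-y\|+\alpha M$ for all $x,y$. Let $N$ be a positive integer, $T=N\Delta t$, $\phi_N$ the $N$-fold composition of $\Phi$, $a=(1+L\alpha)^N$ and $b=\sum_{r=0}^{N-1}(1+L\alpha)^r\alpha M$. Let $r_0>0$, $k\ge1$, $\lambda>0$, $\mathbb{D}_0=\{x:\|x\|\le r_0\}$, and assume $\|\phi_N(x_0)\|\le k\|x_0\|e^{-\lambda T}$ for all $x_0\in\mathbb{D}_0$. Then for all $x,y\in\mathbb{D}_0$, $$\|\phi_N(x)-\phi_N(y)\|\le\sqrt{2kr_0e^{-\lambda T}a\|x-y\|+2kr_0e^{-\lambda T}b}.$$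
   Context: $\Phi$ is the classical RK4 map $\Phi(x)=x+\frac{\Delta t}{6}(k_1+2k_2+2k_3+k_4)$, $k_1=f(x)$, $k_2=f(x+k_1\Delta t/2)$, $k_3=f(x+k_2\Delta t/2)$, $k_4=f(x+k_3\Delta t)$, for an autonomous system $\dot x=f(x)$ with equilibrium at the origin which is exponentially stable on $\mathbb{D}_0$ with constants $k,\lambda$; $\phi_N(x_0)$ is the simulated state after time $T$ starting at $x_0$. *)

From mathcomp Require Import all_boot all_order all_algebra.
From mathcomp Require Import all_classical all_reals all_analysis.
Set Implicit Arguments. Unset Strict Implicit. Unset Printing Implicit Defensive.
Import Order.TTheory GRing.Theory Num.Theory.
Local Open Scope ring_scope.

Definition enorm {R : realType} {n : nat} (v : 'rV[R]_n) : R :=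
  Num.sqrt (\sum_(i < n) (v ord0 i) ^+ 2).

Definition rk4 {R : realType} {n : nat} (f : 'rV[R]_n -> 'rV[R]_n) (dt : R)
  (x : 'rV[R]_n) : 'rV[R]_n :=
  let k1 := f x in
  let k2 := f (x + (dt / 2) *: k1) in
  let k3 := f (x + (dt / 2) *: k2) in
  let k4 := f (x + dt *: k3) in
  x + (dt / 6) *: (k1 + 2 *: k2 + 2 *: k3 + k4).

From mathcomp Require Import all_boot all_order all_algebra.
From mathcomp Require Import all_classical all_reals all_analysis.
From mathcomp Require Import ring lra.
Import Order.TTheory GRing.Theory Num.Theory.
Local Open Scope ring_scope.

(* Write D := |phi_N x - phi_N y|.  Iterating the affine Lipschitz bound of
   one RK4 step gives D <= a |x - y| + b, while the exponential decay bound
   puts both phi_N x and phi_N y in the ball of radius c := k r0 e^(-lam T),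
   so D <= 2c.  Multiplying the two bounds gives D^2 <= 2c (a |x - y| + b). *)

Lemma enorm_ge0 {R : realType} {n : nat} (v : 'rV[R]_n) : 0 <= enorm v.
Proof. exact: sqrtr_ge0. Qed.

Lemma enorm_sqr {R : realType} {n : nat} (v : 'rV[R]_n) :
  enorm v ^+ 2 = \sum_(i < n) v ord0 i ^+ 2.
Proof. by rewrite sqr_sqrtr // sumr_ge0 // => i _; exact: sqr_ge0. Qed.

Lemma enorm_sub_sqr_le {R : realType} {n : nat} (u v : 'rV[R]_n) :
  enorm (u - v) ^+ 2 <= 2 * (enorm u ^+ 2 + enorm v ^+ 2).
Proof.
rewrite !enorm_sqr -big_split mulr_sumr /=; apply: ler_sum => i _.
rewrite !mxE; have := sqr_ge0 (u ord0 i + v ord0 i); nra.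
Qed.

Lemma enorm_sub_le_double {R : realType} {n : nat} {u v : 'rV[R]_n} {c : R} :
  enorm u <= c -> enorm v <= c -> enorm (u - v) <= 2 * c.
Proof.
move=> hu hv; have c0 : 0 <= c := le_trans (enorm_ge0 u) hu.
have hu2 : enorm u ^+ 2 <= c ^+ 2 by rewrite ler_sqr ?nnegrE ?enorm_ge0.
have hv2 : enorm v ^+ 2 <= c ^+ 2 by rewrite ler_sqr ?nnegrE ?enorm_ge0.
rewrite -ler_sqr ?nnegrE ?enorm_ge0 ?mulr_ge0 //.
have := enorm_sub_sqr_le u v; nra.
Qed.

Lemma iter_affine_bound {R : realDomainType} {T : Type} (d : T -> T -> R)
    {F : T -> T} {q c : R} :
  0 <= q -> (forall x y, d (F x) (F y) <= q * d x y + c) ->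
  forall m x y,
    d (iter m F x) (iter m F y) <= q ^+ m * d x y + \sum_(r < m) q ^+ r * c.
Proof.
move=> q0 hF; elim=> [|m IH] x y /=; first by rewrite big_ord0 expr0 mul1r addr0.
apply: (le_trans (hF _ _)); rewrite big_ord_recl expr0 mul1r exprS.
under eq_bigr do rewrite lift0 exprS -mulrA.
rewrite -mulr_sumr [c + _]addrC addrA -mulrA -mulrDr lerD2r.
exact: (ler_wpM2l q0 (IH x y)).
Qed.

Lemma le_sqrt_mul {R : rcfType} {x u v : R} :
  0 <= x -> x <= u -> x <= v -> x <= Num.sqrt (u * v).
Proof.
move=> x0 xu xv; have uv0 : 0 <= u * v by rewrite mulr_ge0 // (le_trans x0).
by rewrite -(ger0_norm x0) -sqrtr_sqr ler_sqrt // expr2 ler_pM.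
Qed.

Theorem theorem5 (R : realType) (n : nat) (f : 'rV[R]_n -> 'rV[R]_n)
    (dt L M r0 k lam : R) (N : nat) :
  f 0 = 0 ->
  0 < dt -> 0 < L -> 0 <= M -> (0 < N)%N ->
  0 < r0 -> 1 <= k -> 0 < lam ->
  let alpha := dt * (1 + L * dt / 2 + (L * dt) ^+ 2 / 6 + (L * dt) ^+ 3 / 24) in
  let Phi := rk4 f dt in
  let phiN := iter N Phi in
  let T := N%:R * dt in
  let a := (1 + L * alpha) ^+ N in
  let b := \sum_(r < N) (1 + L * alpha) ^+ r * alpha * M in
  (forall x y : 'rV[R]_n,
      enorm (Phi x - Phi y) <= (1 + L * alpha) * enorm (x - y) + alpha * M) ->
  (forall x0 : 'rV[R]_n, enorm x0 <= r0 ->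
      enorm (phiN x0) <= k * enorm x0 * expR (- lam * T)) ->
  forall x y : 'rV[R]_n, enorm x <= r0 -> enorm y <= r0 ->
    enorm (phiN x - phiN y) <=
      Num.sqrt (2 * k * r0 * expR (- lam * T) * a * enorm (x - y)
                + 2 * k * r0 * expR (- lam * T) * b).
Proof.
move=> _ dt0 L0 _ _ _ k1 _ alpha Phi phiN T a b hPhi hdecay x y hx hy.
set e := expR (- lam * T); set c := k * r0 * e.
have alpha0 : 0 <= alpha.
  by rewrite mulr_ge0 ?addr_ge0 ?ler01 ?divr_ge0 ?exprn_ge0 ?mulr_ge0 ?ltW.
have q0 : 0 <= 1 + L * alpha := addr_ge0 ler01 (mulr_ge0 (ltW L0) alpha0).
have hlip : enorm (phiN x - phiN y) <= a * enorm (x - y) + b.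
  rewrite /b; under eq_bigr do rewrite -mulrA.
  exact: (iter_affine_bound (fun u v => enorm (u - v)) q0 hPhi).
have hball z : enorm z <= r0 -> enorm (phiN z) <= c.
  move=> hz; apply: (le_trans (hdecay z hz)).
  by rewrite ler_wpM2r ?ler_wpM2l ?(ltW (expR_gt0 _)) // (le_trans ler01).
have -> : 2 * k * r0 * e * a * enorm (x - y) + 2 * k * r0 * e * b =
          (2 * c) * (a * enorm (x - y) + b) by rewrite /c; ring.
exact: le_sqrt_mul (enorm_ge0 _)
  (enorm_sub_le_double (hball x hx) (hball y hy)) hlip.
Qed.
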